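(* Let $\mathbf{A}=(A,\mathcal{R})$ and $\mathbf{B}=(B,\mathcal{S})$ be $\mathbf{K}$-objects and $\mu:\Phi\mathbf{B}\to\Phi\mathbf{A}$ a natural transformation. Then there is a $\mathbf{K}$-morphism $f:\mathbf{A}\to\mathbf{B}$ with $\mu=\Phi f$; that is, $\Phi$ is full.
   Context: $\mathbf{T}$ is the category whose objects are pairs $(A,\mathcal{R})$ with $A$ a set and $\mathcal{R}$ a family of subsets of $A$, and whose morphisms $f:(A,\mathcal{R})\to(B,\mathcal{S})$ are maps $f:A\to B$ with $f^{-1}[S]\in\mathcal{R}$ for all $S\in\mathcal{S}$. Fix a simple graph with vertex set $V=\{v_1,\dots,v_6\}$ and edge set $\mathcal{G}$ (two-element subsets of $V$) with no non-identity automorphism. For a $\mathbf{T}$-object $(A,\mathcal{R})$ let $\Psi(A,\mathcal{R})=(\overline{A},\overline{\mathcal{R}})$ with $\overline{A}=A\sqcup V$ and $\overline{\mathcal{R}}$ consisting of $\{v_i\}$, $\overline{A}\setminus\{v_i\}$ ($i=1,\dots,6$), $G$, $\overline{A}\setminus G$ ($G\in\mathcal{G}$), and $\{v_1,v_2,v_3\}\cup R$, $\{v_4,v_5,v_6\}\cup(A\setminus R)$ ($R\in\mathcal{R}$). $\mathbf{K}$ is the full subcategory of $\mathbf{T}$ on the objects of the form $\Psi(A,\mathcal{R})$. For a $\mathbf{K}$-object $\mathbf{A}=(A,\mathcal{R})$ and a set $X$, let $\approx_{\mathbf{A}}$ be the equivalence on maps $A\to X$: $g_1\approx_{\mathbf{A}}g_2$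 iff $g_1=g_2$, or $g_1[A]=g_2[A]$ is a two-element set $\{x,x'\}$ and $g_1^{-1}[\{x\}]=g_2^{-1}[\{x'\}]\in\mathcal{R}$. The set functor $\Phi\mathbf{A}$ is $(\Phi\mathbf{A})X=\{g\,;\,g:A\to X\}/\!\approx_{\mathbf{A}}$, $((\Phi\mathbf{A})h)(g/\!\approx_{\mathbf{A}})=hg/\!\approx_{\mathbf{A}}$. For a $\mathbf{K}$-morphism $f:\mathbf{A}\to\mathbf{B}$, $\Phi f:\Phi\mathbf{B}\to\Phi\mathbf{A}$ is the natural transformation with $(\Phi f)_X(g/\!\approx_{\mathbf{B}})=gf/\!\approx_{\mathbf{A}}$ for $g:B\to X$. *)

From mathcomp Require Import all_boot all_fingroup.
From mathcomp Require Import boolp classical_sets.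
Set Implicit Arguments. Unset Strict Implicit. Unset Printing Implicit Defensive.
Local Open Scope classical_set_scope.

(* The vertex set V = {v_1,...,v_6} is 'I_6, with v_i represented by i-1. *)

Definition is_Tmorph (A B : Type) (R : set (set A)) (S : set (set B)) (f : A -> B) : Prop :=
  forall U, S U -> R (f @^-1` U).

Definition simple_graph (G : set (set 'I_6)) : Prop :=
  forall E, G E -> exists x y : 'I_6, x <> y /\ E = [set x; y].

Definition graph_aut (G : set (set 'I_6)) (s : {perm 'I_6}) : Prop :=
  forall x y : 'I_6, G [set x; y] <-> G [set s x; s y].

Definition rigid (G : set (set 'I_6)) : Prop :=
  forall s : {perm 'I_6}, graph_aut G s -> s = 1%g.

Definition Psi_fam (G : set (set 'I_6)) (A : Type) (R : set (set A)) : set (set (A + 'I_6)) :=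
  fun U =>
    (exists i : 'I_6, U = [set inr i] \/ U = ~` [set inr i]) \/
    (exists E, G E /\ (U = inr @` E \/ U = ~` (inr @` E))) \/
    (exists Rr, R Rr /\
       (U = (inr @` [set i : 'I_6 | (i < 3)%N]) `|` (inl @` Rr) \/
        U = (inr @` [set i : 'I_6 | (3 <= i)%N]) `|` (inl @` (~` Rr)))).

Definition approx (C : Type) (RC : set (set C)) (X : Type) (g1 g2 : C -> X) : Prop :=
  g1 = g2 \/
  exists x x' : X, x <> x' /\
    range g1 = [set x; x'] /\ range g2 = [set x; x'] /\
    g1 @^-1` [set x] = g2 @^-1` [set x'] /\
    RC (g1 @^-1` [set x]).

(* A natural transformation Phi(C1,RC1) -> Phi(C2,RC2), presented on
   representatives: mu X sends a map C1 -> X to a map C2 -> X, compatibly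
   with the quotients, and naturally in X up to \approx. *)
Definition is_nat_trans (C1 : Type) (RC1 : set (set C1)) (C2 : Type) (RC2 : set (set C2))
  (mu : forall X : Type, (C1 -> X) -> (C2 -> X)) : Prop :=
  (forall (X : Type) (g1 g2 : C1 -> X), approx RC1 g1 g2 -> approx RC2 (mu X g1) (mu X g2)) /\
  (forall (X Y : Type) (h : X -> Y) (g : C1 -> X),
      approx RC2 (mu Y (h \o g)) (h \o mu X g)).

From mathcomp Require Import all_boot all_fingroup.
From mathcomp Require Import boolp classical_sets.
Local Open Scope classical_set_scope.
Set Implicit Arguments. Unset Strict Implicit.

(* Take f := mu id; naturality gives mu g ~ g \o f for every g.  For U in the
   family of B with indicator chi, naturality gives mu chi ~ chi \o f and
   mu (~~ chi) ~ ~~ (chi \o f), while chi ~ ~~ chi (U is a proper member)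
   gives mu chi ~ mu (~~ chi).  On maps into bool, ~ means "equal, or
   complementary with true-fibre in the family"; as the family of A is closed
   under complement this is an equivalence, so chi \o f ~ ~~ (chi \o f),
   which forces f^-1 U = (chi \o f)^-1 true into the family of A. *)

Section BoolApprox.
Variables (C : Type) (RC : set (set C)).
Hypothesis RC_setC : forall P, RC P -> RC (~` P).

Definition flip_approx (h k : C -> bool) : Prop :=
  k = h \/ (k = negb \o h /\ RC [set c | h c]).

Lemma RC_negb (h : C -> bool) : RC [set c | h c] -> RC [set c | ~~ h c].
Proof.
move=> /RC_setC; congr RC; apply/seteqP; split=> c /=; by case: (h c).
Qed.

Lemma approx_flip (h k : C -> bool) : approx RC h k -> flip_approx h k.
Proof.
case=> [->|[x [x' [neq_xx' [_ [_ [eq_fibres RC_fibre]]]]]]]; first by left.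
have eq_x' : x' = ~~ x by case: x x' neq_xx' {eq_fibres RC_fibre} => [] [].
subst x'; clear neq_xx'.
right; split; last first.
  case: x {eq_fibres} RC_fibre => [//|/RC_setC].
  by congr RC; apply/seteqP; split=> c /=; case: (h c).
apply/funext=> c; have := congr1 (fun P : set C => P c) eq_fibres.
rewrite /preimage /= propeqE; case: (h c); case: (k c) => /=.
all: by case: x {eq_fibres RC_fibre} => -[H1 H2]; first [done | exact: H1 | exact: H2].
Qed.

Lemma flip_approx_sym (h k : C -> bool) : flip_approx h k -> flip_approx k h.
Proof.
case=> [->|[-> RC_h]]; first by left.
by right; split; [apply/funext=> c /=; rewrite negbK | exact: RC_negb].
Qed.

Lemma flip_approx_trans (h k l : C -> bool) :
  flip_approx h k -> flip_approx k l -> flip_approx h l.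
Proof.
case=> [->//|[-> RC_h]] [->|[-> _]]; first by right.
by left; apply/funext=> c /=; rewrite negbK.
Qed.

Lemma flip_approx_negb (c0 : C) (h : C -> bool) :
  flip_approx h (negb \o h) -> RC [set c | h c].
Proof.
case=> [/(congr1 (@^~ c0)) /=|[]//]; by case: (h c0).
Qed.

End BoolApprox.

Lemma approx_indicator (C : Type) (RC : set (set C)) (P : set C) :
  RC P -> P !=set0 -> ~` P !=set0 ->
  approx RC (fun c => `[< P c >]) (fun c => ~~ `[< P c >]).
Proof.
move=> RC_P [c1 P_c1] [c2 nP_c2]; right; exists true, false.
have range_bool (h : C -> bool) a b : h a -> ~~ h b -> range h = [set true; false].
  move=> ha hb; apply/seteqP; split=> [[] _ | _ [->|->]]; [by left | by right | |].
  - by exists a.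
  - by exists b => //; apply/negbTE.
have [P1 nP2] := (asboolT P_c1, asboolF nP_c2).
split=> //; split; first by apply: (range_bool _ c1 c2); rewrite ?P1 ?nP2.
split; first by apply: (range_bool _ c2 c1); rewrite ?P1 ?nP2.
have fibre_true : (fun c => `[< P c >]) @^-1` [set true] = P.
  by apply/seteqP; split=> c /=; rewrite /preimage /= => /asboolP.
split; last by rewrite fibre_true.
by apply/seteqP; split=> c; rewrite /preimage /=; case: asboolP.
Qed.

Section NatTransIdentity.
Variables (C1 : Type) (RC1 : set (set C1)) (C2 : Type) (RC2 : set (set C2)).
Variable mu : forall X : Type, (C1 -> X) -> (C2 -> X).
Hypothesis mu_nat : is_nat_trans RC1 RC2 mu.
Hypothesis RC1_proper : forall P, RC1 P -> P !=set0 /\ ~` P !=set0.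
Hypothesis RC2_setC : forall P, RC2 P -> RC2 (~` P).
Variable c0 : C2.

Lemma is_Tmorph_nat_trans_id : is_Tmorph RC2 RC1 (mu id).
Proof.
case: mu_nat => mu_compat mu_natural U RC1_U.
set f := mu id; pose chi y := `[< U y >].
have [U_neq0 nU_neq0] := RC1_proper RC1_U.
have chi_approx := approx_indicator RC1_U U_neq0 nU_neq0.
have chi_f : flip_approx RC2 (mu chi) (chi \o f)
  := approx_flip RC2_setC (mu_natural _ _ chi id).
have chi_nchi : flip_approx RC2 (mu chi) (mu (negb \o chi))
  := approx_flip RC2_setC (mu_compat _ _ _ chi_approx).
have nchi_f : flip_approx RC2 (mu (negb \o chi)) (negb \o (chi \o f))
  := approx_flip RC2_setC (mu_natural _ _ (negb \o chi) id).
have f_chi := flip_approx_sym RC2_setC chi_f.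
move/(flip_approx_negb c0): (flip_approx_trans (flip_approx_trans f_chi chi_nchi) nchi_f).
congr RC2.
by apply/seteqP; split=> c; rewrite /preimage /= /chi asboolE.
Qed.

End NatTransIdentity.

Lemma setC_image_sum (A B : Type) (Y : set B) (X : set A) :
  ~` (inr @` Y `|` inl @` X) = inr @` (~` Y) `|` inl @` (~` X).
Proof.
have in_inl (Y' : set B) (X' : set A) a : (inr @` Y' `|` inl @` X') (inl a) = X' a.
  by apply/propext; split=> [[[? _ ?]|[? ? [<-]]] | Xa] //; right; exists a.
have in_inr (Y' : set B) (X' : set A) b : (inr @` Y' `|` inl @` X') (inr b) = Y' b.
  by apply/propext; split=> [[[? ? [<-]]|[? _ ?]] | Yb] //; left; exists b.
apply/funext=> -[a|b]; rewrite ?(in_inl, in_inr).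
  exact: (f_equal not (in_inl Y X a)).
exact: (f_equal not (in_inr Y X b)).
Qed.

Lemma setC_lt3 : ~` [set i : 'I_6 | (i < 3)%N] = [set i | (3 <= i)%N].
Proof.
apply/funext=> i /=; rewrite [X in _ = is_true X]leqNgt.
by apply/propext; split=> /negP.
Qed.

Lemma exists_neq2 (T : finType) (x y : T) : (2 < #|T|)%N -> exists z, z != x /\ z != y.
Proof.
move=> T_gt2.
have /subsetPn [z _] : ~~ ([set: T] \subset [set x; y])%SET.
  apply: contraTN T_gt2 => /subset_leq_card; rewrite cardsT cards2 -leqNgt.
  by move/leq_trans; apply; case: (x != y).
by rewrite !inE negb_or => /andP; exists z.
Qed.

Section PsiFamily.
Variables (G : set (set 'I_6)) (A : Type) (R : set (set A)).

Lemma Psi_fam_setC (P : set (A + 'I_6)) : Psi_fam G R P -> Psi_fam G R (~` P).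
Proof.
case=> [[i [->|->]]|[[E [GE [->|->]]]|[Rr [R_Rr [->|->]]]]].
- by left; exists i; right.
- by left; exists i; left; rewrite setCK.
- by right; left; exists E; split=> //; right.
- by right; left; exists E; split=> //; left; rewrite setCK.
- by right; right; exists Rr; split=> //; right; rewrite setC_image_sum setC_lt3.
- by right; right; exists Rr; split=> //; left; rewrite setC_image_sum -setC_lt3 !setCK.
Qed.

Hypothesis G_simple : simple_graph G.

Lemma Psi_fam_neq0 (P : set (A + 'I_6)) : Psi_fam G R P -> P !=set0.
Proof.
have I6_gt2 : (2 < #|'I_6|)%N by rewrite card_ord.
case=> [[i [->|->]]|[[E [/G_simple [x [y [_ ->]]] [->|->]]]|[Rr [_ [->|->]]]]].
- by exists (inr i).
- have [j [ji _]] := exists_neq2 i i I6_gt2.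
  by exists (inr j) => -[ji_eq]; rewrite ji_eq eqxx in ji.
- by exists (inr x); exists x => //; left.
- have [z [zx zy]] := exists_neq2 x y I6_gt2.
  by exists (inr z) => -[w [->|->] [wz]]; rewrite wz eqxx in zx zy.
- by exists (inr ord0); left; exists ord0.
- by exists (inr ord_max); left; exists ord_max.
Qed.

Lemma Psi_fam_proper (P : set (A + 'I_6)) :
  Psi_fam G R P -> P !=set0 /\ ~` P !=set0.
Proof. by move=> RP; split; apply: Psi_fam_neq0; last exact: Psi_fam_setC. Qed.

End PsiFamily.

Theorem lemma3p6 (G : set (set 'I_6)) (HG : simple_graph G) (Hrig : rigid G)
  (A : Type) (R : set (set A)) (B : Type) (S : set (set B))
  (mu : forall X : Type, (B + 'I_6 -> X) -> (A + 'I_6 -> X))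
  (Hmu : is_nat_trans (Psi_fam G S) (Psi_fam G R) mu) :
  exists f : A + 'I_6 -> B + 'I_6,
    is_Tmorph (Psi_fam G R) (Psi_fam G S) f /\
    forall (X : Type) (g : B + 'I_6 -> X),
      approx (Psi_fam G R) (mu X g) (g \o f).
Proof.
exists (mu _ id); split; last by move=> X g; exact: Hmu.2 _ X g id.
apply: is_Tmorph_nat_trans_id Hmu _ _ (inr ord0).
- exact: Psi_fam_proper.
- exact: Psi_fam_setC.
Qed.
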